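(* Let $M$ be a smooth manifold, $\nabla$ an affine connection on $M$, and $(\hat J_1,\hat J_2,\hat J_3)$ a generalized almost quaternionic structure on $M$. If $\hat J_1$ and $\hat J_2$ are $\nabla$-integrable, then $\hat J_3$ is $\nabla$-integrable.
   Context: A generalized almost quaternionic structure: endomorphisms $\hat J_1,\hat J_2,\hat J_3$ of $TM\oplus T^*M$ with $\hat J_1^2=\hat J_2^2=\hat J_3^2=-I$, $\hat J_1\hat J_2=-\hat J_2\hat J_1$, $\hat J_3=\hat J_1\hat J_2$. The $\nabla$-bracket: $[X+\eta,Y+\beta]_\nabla:=[X,Y]+\nabla_X\beta-\nabla_Y\eta$ for vector fields $X,Y$, 1-forms $\eta,\beta$. $N^\nabla_{\hat K}(\sigma,\tau):=[\hat K\sigma,\hat K\tau]_\nabla-\hat K[\hat K\sigma,\tau]_\nabla-\hat K[\sigma,\hat K\tau]_\nabla+\hat K^2[\sigma,\tau]_\nabla$; $\hat K$ is $\nabla$-integrable if $N^\nabla_{\hat K}=0$. *)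

(* Abstract algebraic model of the data on a smooth manifold M:
   A  = C^oo(M) (a commutative R-algebra, R the reals),
   X  = vector fields (an A-module), Om = 1-forms (an A-module),
   act x f = x(f) (vector fields act as derivations of A),
   lie = Lie bracket of vector fields, nabla = affine connection acting on 1-forms.
   Sections of TM (+) T*M are pairs in X * Om. *)
From HB Require Import structures.
From mathcomp Require Import all_boot all_order all_algebra.
From mathcomp Require Import reals.
Set Implicit Arguments. Unset Strict Implicit. Unset Printing Implicit Defensive.
Import GRing.Theory.
Local Open Scope ring_scope.

Section ManifoldData.
Variables (R : realType) (A : comAlgType R) (X Om : lmodType A).
Variables (act : X -> A -> A) (lie : X -> X -> X) (nabla : X -> Om -> Om).

Definition vector_fields_axioms : Prop :=
  (forall x y f, act (x + y) f = act x f + act y f) /\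
      (forall x g f, act (g *: x) f = g * act x f) /\
      (forall x f g, act x (f + g) = act x f + act x g) /\
      (forall x (r : R) f, act x (r *: f) = r *: act x f) /\
      (forall x f g, act x (f * g) = f * act x g + act x f * g) /\
      (forall x y z, lie (x + y) z = lie x z + lie y z) /\
      (forall x y, lie x y = - lie y x) /\
      (forall x y z, lie x (lie y z) + lie y (lie z x) + lie z (lie x y) = 0) /\
      (forall x y f, lie x (f *: y) = f *: lie x y + act x f *: y) /\
      (forall x y f, act (lie x y) f = act x (act y f) - act y (act x f)).

Definition affine_connection : Prop :=
  (forall x y w, nabla (x + y) w = nabla x w + nabla y w) /\
      (forall x f w, nabla (f *: x) w = f *: nabla x w) /\
      (forall x w v, nabla x (w + v) = nabla x w + nabla x v) /\
      (forall x f w, nabla x (f *: w) = f *: nabla x w + act x f *: w).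

Definition nabla_bracket (s t : X * Om) : X * Om :=
  (lie s.1 t.1, nabla s.1 t.2 - nabla t.1 s.2).

Definition bundle_endo (K : X * Om -> X * Om) : Prop :=
  forall (f : A) (s t : X * Om), K (f *: s + t) = f *: K s + K t.

Definition nabla_nijenhuis (K : X * Om -> X * Om) (s t : X * Om) : X * Om :=
  nabla_bracket (K s) (K t) - K (nabla_bracket (K s) t)
  - K (nabla_bracket s (K t)) + K (K (nabla_bracket s t)).

Definition nabla_integrable (K : X * Om -> X * Om) : Prop :=
  forall s t, nabla_nijenhuis K s t = 0.

Definition gen_almost_quaternionic (J1 J2 J3 : X * Om -> X * Om) : Prop :=
  bundle_endo J1 /\ bundle_endo J2 /\ bundle_endo J3 /\
      (forall s, J1 (J1 s) = - s) /\ (forall s, J2 (J2 s) = - s) /\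
      (forall s, J3 (J3 s) = - s) /\
      (forall s, J1 (J2 s) = - J2 (J1 s)) /\
      (forall s, J3 s = J1 (J2 s)).

End ManifoldData.

From HB Require Import structures.
From mathcomp Require Import all_boot all_order all_algebra.
From mathcomp Require Import reals.

(* Let N_K be the Nijenhuis tensor of K for the bracket B, and let I, J be
   anticommuting with I^2 = J^2 = -1 and N_I = N_J = 0.  Expanding N_{IJ}
   with the integrability of I at (Jx, Jy) and of J at (Ix, y) and (x, Iy)
   gives
     N_{IJ}(x, y) = B(Jx, Jy) - B(Ix, Iy) - IJ (B(Ix, Jy) + B(Jx, Iy)).
   As JI = -IJ and N_{-K} = N_K, the same computation with I and J exchanged
   computes the same N_{IJ} as the opposite expression, so 2 N_{IJ} = 0, and
   2 is invertible in C^oo(M). *)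

Set Implicit Arguments. Unset Strict Implicit. Unset Printing Implicit Defensive.
Import GRing.Theory Num.Theory.
Local Open Scope ring_scope.

Lemma morph_oppr_of_addr (U W : zmodType) (f : U -> W) :
  {morph f : a b / a + b} -> {morph f : a / - a}.
Proof.
move=> fD a; have f0 : f 0 = 0 by apply: (addIr (f 0)); rewrite -fD !add0r.
by apply/eqP; rewrite -addr_eq0 -fD addNr f0.
Qed.

Section Nijenhuis.
Variables (V : zmodType) (B : V -> V -> V).
Hypotheses (BNl : forall a b, B (- a) b = - B a b)
           (BNr : forall a b, B a (- b) = - B a b).

Definition nijenhuis (K : V -> V) (x y : V) : V :=
  B (K x) (K y) - K (B (K x) y) - K (B x (K y)) + K (K (B x y)).

Lemma nijenhuis_opp (K : {additive V -> V}) (L : V -> V) :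
  L =1 (fun z => - K z) -> nijenhuis L =2 nijenhuis K.
Proof. by move=> LK x y; rewrite /nijenhuis !LK !BNl !BNr !(raddfN K) !opprK. Qed.

Section AlmostComplex.
Variables (K : {additive V -> V}).
Hypothesis KK : forall z, K (K z) = - z.

Lemma nijenhuis_almost_complexE x y :
  nijenhuis K x y = B (K x) (K y) - K (B (K x) y + B x (K y)) - B x y.
Proof. by rewrite /nijenhuis KK (raddfD K) opprD addrA. Qed.

Lemma nijenhuis_eq0_bracket : (forall x y, nijenhuis K x y = 0) ->
  forall x y, B (K x) (K y) = K (B (K x) y + B x (K y)) + B x y.
Proof.
move=> NK x y; apply/eqP; rewrite -subr_eq0 -(NK x y).
by rewrite nijenhuis_almost_complexE opprD addrA.
Qed.

End AlmostComplex.

Section Anticommuting.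
Variables (I J : {additive V -> V}).
Hypotheses (II : forall z, I (I z) = - z) (JJ : forall z, J (J z) = - z)
           (JI : forall z, J (I z) = - I (J z)).
Hypotheses (NI : forall x y, nijenhuis I x y = 0)
           (NJ : forall x y, nijenhuis J x y = 0).

Let IJ z : I (J z) = - J (I z). Proof. by rewrite JI opprK. Qed.

Lemma bracket_anticomm_mixed x y :
  B (I (J x)) (J y) + B (J x) (I (J y)) =
  J (B (I (J x)) y + B x (I (J y))) - J (B (I x) (J y) + B (J x) (I y))
  - (B (I x) y + B x (I y)).
Proof.
rewrite !IJ !BNl !BNr !(nijenhuis_eq0_bracket JJ NJ).
rewrite -opprD addrACA opprD -(raddfD J).
rewrite -(opprD (B (J (I x)) y)) -(raddfB J) -[in RHS]opprD (raddfN J).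
by rewrite (addrC (B (J x) (I y))) addrACA.
Qed.

Lemma nijenhuis_anticomm_compE x y :
  nijenhuis (I \o J) x y =
  B (J x) (J y) - B (I x) (I y) - I (J (B (I x) (J y) + B (J x) (I y))).
Proof.
have KK z : (I \o J) ((I \o J) z) = - z by rewrite /= JI (raddfN I) II opprK JJ.
rewrite (nijenhuis_almost_complexE KK) /=.
rewrite (nijenhuis_eq0_bracket II NI (J x)) bracket_anticomm_mixed !(raddfB I).
rewrite [in RHS](nijenhuis_eq0_bracket II NI x).
set p := I (J (B _ y + _)); set q := I (J _); set u := I (B _ y + _).
rewrite (addrAC _ _ (- p)) (addrAC _ _ (- p)) (addrAC p) subrr add0r.
by rewrite opprD addrA [RHS]addrC !addrA (addrAC (- q)).
Qed.

End Anticommuting.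

Lemma nijenhuis_anticomm_comp_mulr2n_eq0 (I J : {additive V -> V}) :
  (forall z, I (I z) = - z) -> (forall z, J (J z) = - z) ->
  (forall z, J (I z) = - I (J z)) ->
  (forall x y, nijenhuis I x y = 0) -> (forall x y, nijenhuis J x y = 0) ->
  forall x y, nijenhuis (I \o J) x y *+ 2 = 0.
Proof.
move=> II JJ JI NI NJ x y; have IJ z : I (J z) = - J (I z) by rewrite JI opprK.
rewrite mulr2n {2}(nijenhuis_opp (K := J \o I) IJ).
rewrite (nijenhuis_anticomm_compE II JJ JI NI NJ).
rewrite (nijenhuis_anticomm_compE JJ II IJ NJ NI).
rewrite JI opprK (addrC (B (J x) (I y))).
by apply/eqP; rewrite addr_eq0 opprD opprB.
Qed.

End Nijenhuis.

Lemma lmod_mulr2n_eq0 (R : numFieldType) (A : lalgType R) (V : lmodType A)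
  (v : V) : v *+ 2 = 0 -> v = 0.
Proof.
move=> v2; have half2 : ((2^-1 : R) *: (1 : A)) *+ 2 = 1.
  by rewrite scalerMnl -mulr_natr mulVf ?pnatr_eq0 // (scale1r (s := A)).
by rewrite -[v](scale1r (s := V)) -half2 -scalerMnl scalerMnr v2 scaler0.
Qed.

Section NablaBracket.
Variables (R : realType) (A : comAlgType R) (X Om : lmodType A).
Variables (lie : X -> X -> X) (nabla : X -> Om -> Om).
Hypotheses (lieDl : forall x y z, lie (x + y) z = lie x z + lie y z)
  (lie_skew : forall x y, lie x y = - lie y x)
  (nablaDl : forall x y w, nabla (x + y) w = nabla x w + nabla y w)
  (nablaDr : forall x w v, nabla x (w + v) = nabla x w + nabla x v).

Let lieNl x y : lie (- x) y = - lie x y :=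
  morph_oppr_of_addr (fun a b => lieDl a b y) x.
Let nablaNl x w : nabla (- x) w = - nabla x w :=
  morph_oppr_of_addr (fun a b => nablaDl a b w) x.
Let nablaNr x w : nabla x (- w) = - nabla x w :=
  morph_oppr_of_addr (nablaDr x) w.

Lemma nabla_bracketNl s t :
  nabla_bracket lie nabla (- s) t = - nabla_bracket lie nabla s t.
Proof. by rewrite /nabla_bracket /= lieNl nablaNl nablaNr -opprD. Qed.

Lemma nabla_bracketNr s t :
  nabla_bracket lie nabla s (- t) = - nabla_bracket lie nabla s t.
Proof.
by rewrite /nabla_bracket /= lie_skew lieNl -lie_skew nablaNl nablaNr -opprD.
Qed.

End NablaBracket.

Theorem proposition2p11 (R : realType) (A : comAlgType R) (X Om : lmodType A)
  (act : X -> A -> A) (lie : X -> X -> X) (nabla : X -> Om -> Om)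
  (HM : vector_fields_axioms act lie) (Hnabla : affine_connection act nabla)
  (J1 J2 J3 : X * Om -> X * Om)
  (HJ : gen_almost_quaternionic J1 J2 J3) :
  nabla_integrable lie nabla J1 -> nabla_integrable lie nabla J2 ->
  nabla_integrable lie nabla J3.
Proof.
move=> N1 N2 s t.
have [_ [_ [_ [_ [_ [lieDl [lie_skew _]]]]]]] := HM.
have [nablaDl [_ [nablaDr _]]] := Hnabla.
have [J1lin [J2lin [_ [J11 [J22 [_ [J12 J3E]]]]]]] := HJ.
pose I : {additive X * Om -> X * Om} :=
  HB.pack J1 (GRing.isZmodMorphism.Build _ _ J1 (zmod_morphism_linear J1lin)).
pose J : {additive X * Om -> X * Om} :=
  HB.pack J2 (GRing.isZmodMorphism.Build _ _ J2 (zmod_morphism_linear J2lin)).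
have -> : nabla_nijenhuis lie nabla J3 s t =
          nijenhuis (nabla_bracket lie nabla) (I \o J) s t.
  by rewrite /nabla_nijenhuis /nijenhuis /= !J3E.
apply: (lmod_mulr2n_eq0 (R := R)).
apply: nijenhuis_anticomm_comp_mulr2n_eq0 => //.
- exact: nabla_bracketNl.
- exact: nabla_bracketNr.
- by move=> z; rewrite /= J12 opprK.
Qed.
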